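(* Let $v,k,t$ be integers with $v>k>t\ge 2$. Let $X$ be a $v$-set and let $X=X_1\cup X_2$ be a partition of $X$ with $|X_1|=v_1$ and $|X_2|=v_2$. For $i=0,\dots,t$ let $D_i=(X_1,\mathfrak B^{(i)})$ be the complete $i$-$(v_1,i,1)$ design (all $i$-subsets of $X_1$), and for $i=t+1,\dots,k$ let $D_i=(X_1,\mathfrak B^{(i)})$ be a simple $t$-$(v_1,i,\lambda^{(i)}_t)$ design. Similarly, for $i=0,\dots,t$ let $\bar D_i=(X_2,\bar{\mathfrak B}^{(i)})$ be the complete $i$-$(v_2,i,1)$ design, and for $i=t+1,\dots,k$ let $\bar D_i=(X_2,\bar{\mathfrak B}^{(i)})$ be a simple $t$-$(v_2,i,\bar\lambda^{(i)}_t)$ design. Let $K=\{(0,k),(1,k-1),\dots,(k-1,1),(k,0)\}$. Suppose there is a subset $R\subseteq K$ such that for each $(i,k-i)\in R$ the block set of $D_i$ is partitioned into $N_i$ classes $\mathfrak A^{(i)}_1,\dots,\mathfrak A^{(i)}_{N_i}$, each $(X_1,\mathfrak A^{(i)}_h)$ being an $s_i$-$(v_1,i,\lambda^{*(i)}_{s_i})$ design (same index for all $h$), with $s_i<t$, and the block set of $\bar D_{k-i}$ is partitioned into $\bar N_{k-i}$ classes $\bar{\mathfrak A}^{(k-i)}_1,\dots,\bar{\mathfrak A}^{(k-i)}_{\bar N_{k-i}}$, each $(X_2,\bar{\mathfrak A}^{(k-i)}_j)$ being an $s_{k-i}$-$(v_2,k-i,\bar\lambda^{*(k-i)}_{s_{k-i}})$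 design (same index for all $j$), with $s_{k-i}<t$, such that (i) $N_i=\bar N_{k-i}$, and (ii) $s_i+s_{k-i}\ge 2\lfloor t/2\rfloor$. For each $(i,k-i)\in R$ choose $\varepsilon_i\in\{0,1\}$ and an integer $w_i$ with $\varepsilon_i\le w_i\le\lfloor N_i/2\rfloor$, and set $$\mathfrak B^*_{(i,k-i)}=\{B_i\cup\bar B_{k-i}:\ B_i\in\mathfrak A^{(i)}_h,\ \bar B_{k-i}\in\bar{\mathfrak A}^{(k-i)}_j,\ \varepsilon_i\le d(h,j)\le w_i\},$$ where $d(h,j)=\min\{|h-j|,\,N_i-|h-j|\}$ for $h,j\in\{1,\dots,N_i\}$; and put $z_i=2w_i+1-\varepsilon_i$ if $w_i<N_i/2$, and $z_i=2w_i-\varepsilon_i$ if $w_i=N_i/2$. For each $(i,k-i)\in K\setminus R$ set $$\mathfrak B_{(i,k-i)}=\{B_i\cup\bar B_{k-i}:\ B_i\in\mathfrak B^{(i)},\ \bar B_{k-i}\in\bar{\mathfrak B}^{(k-i)}\}.$$ Choose $u_i\in\{0,1\}$ for $i=0,\dots,k$ and define $$\mathfrak B=\bigcup_{(i,k-i)\in R}\mathfrak B^*_{(i,k-i)}\times[u_i]\ \cup\bigcup_{(i,k-i)\in K\setminus R}\mathfrak B_{(i,k-i)}\times[u_i].$$ For $r=0,\dots,t$ define $$L_{r,t-r}=\sum_{(i,k-i)\in R}u_i\,\Lambda^{*(i,k-i)}_{(r,t-r)}+\sum_{(i,k-i)\in K\setminus R}u_i\,\lambda^{(i)}_r\,\bar\lambda^{(k-i)}_{t-r},$$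 where $$\Lambda^{*(i,k-i)}_{(r,t-r)}=\begin{cases}\lambda^{*(i)}_r\,\bar\lambda^{*(k-i)}_{t-r}\,N_i\,z_i & \text{if } r\le s_i,\ t-r\le s_{k-i},\\ \lambda^{*(i)}_r\,\bar\lambda^{(k-i)}_{t-r}\,z_i & \text{if } r\le s_i,\ t-r>s_{k-i},\\ \lambda^{(i)}_r\,\bar\lambda^{*(k-i)}_{t-r}\,z_i & \text{if } r>s_i,\ t-r\le s_{k-i}.\end{cases}$$ If $L_{0,t}=L_{1,t-1}=\dots=L_{t,0}=\Lambda$ for some positive integer $\Lambda$, then $(X,\mathfrak B)$ is a simple $t$-$(v,k,\Lambda)$ design.
   Context: A $t$-$(v,k,\lambda)$ design is a pair $(X,\mathfrak B)$ with $|X|=v$ and $\mathfrak B$ a collection of $k$-subsets (blocks) of $X$ such that every $t$-subset of $X$ lies in exactly $\lambda$ blocks; it is simple if no block is repeated. A $t$-$(v,k,\lambda)$ design is also an $s$-$(v,k,\lambda_s)$ design for $0\le s\le t$ with $\lambda_s=\lambda\binom{v-s}{t-s}/\binom{k-s}{t-s}$. Conventions: the $0$-$(v_1,0,1)$ design has exactly one block, the empty set; a design with $k$ equal to the number of points has the single block consisting of all points. Notation: $\lambda^{(i)}_r$ denotes the number of blocks of $D_i$ containing a given $r$-subset of $X_1$ (for $0\le r\le t$; it is $0$ when $r>i$), and $\bar\lambda^{(i)}_r$ the analogous number for $\bar D_i$ and $X_2$. For $r\le s_i$, $\lambda^{*(i)}_r$ denotes the number of blocks of a class $\mathfrak A^{(i)}_h$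 containing a given $r$-subset of $X_1$ (independent of $h$ and of the subset), and $\bar\lambda^{*(k-i)}_r$ (for $r\le s_{k-i}$) the analogous number for classes $\bar{\mathfrak A}^{(k-i)}_j$. For a set $Y$ and $u\in\{0,1\}$, $Y\times[0]=\emptyset$ and $Y\times[1]=Y$. *)

From mathcomp Require Import all_boot.
Set Implicit Arguments.
Unset Strict Implicit.
Unset Printing Implicit Defensive.

(* Blocks are subsets of the finite point type T; a block collection is a
   {set {set T}}, hence designs are automatically simple. *)

Definition blocks_containing (T : finType) (B : {set {set T}}) (S : {set T}) : nat :=
  #|[set b in B | S \subset b]|.

Definition is_design (T : finType) (P : {set T}) (t k lam : nat)
    (B : {set {set T}}) : Prop :=
  (forall b, b \in B -> b \subset P /\ #|b| = k) /\
  (forall S : {set T}, S \subset P -> #|S| = t -> blocks_containing B S = lam).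

Definition complete_blocks (T : finType) (P : {set T}) (i : nat) : {set {set T}} :=
  [set b : {set T} | (b \subset P) && (#|b| == i)].

Definition cdist (N h j : nat) : nat :=
  let a := (h - j) + (j - h) in minn a (N - a).

Definition zval (N w : nat) (eps : bool) : nat :=
  if w.*2 < N then (w.*2).+1 - eps else w.*2 - eps.

Definition join_blocks (T : finType) (C1 C2 : {set {set T}}) : {set {set T}} :=
  [set b1 :|: b2 | b1 in C1, b2 in C2].

Definition Bstar (T : finType) (N : nat) (A Ab : nat -> {set {set T}})
    (eps : bool) (w : nat) : {set {set T}} :=
  \bigcup_(1 <= h < N.+1)
    \bigcup_(1 <= j < N.+1 | (eps <= cdist N h j) && (cdist N h j <= w))
      join_blocks (A h) (Ab j).

(* Lambda*^(i,k-i)_(r,t-r); the fourth case (r > s_i and t-r > s_{k-i}) cannot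
   occur under condition (ii) and is set to 0. Arguments:
   si = s_i, sbi = s_{k-i}, N = N_i, z = z_i, lamSr = lambda*^(i)_r,
   lamSbtr = bar lambda*^(k-i)_(t-r), lamr = lambda^(i)_r,
   lambtr = bar lambda^(k-i)_(t-r). *)
Definition Lambda_star (t r si sbi N z lamSr lamSbtr lamr lambtr : nat) : nat :=
  if r <= si then
    (if t - r <= sbi then lamSr * lamSbtr * N * z else lamSr * lambtr * z)
  else
    (if t - r <= sbi then lamr * lamSbtr * z else 0).

From mathcomp Require Import all_boot zify.
Set Implicit Arguments. Unset Strict Implicit. Unset Printing Implicit Defensive.

(* A t-subset S of X meets X1 in r points and X2 in t - r points, and a block
   B :|: B' with B in X1 and B' in X2 contains S iff B contains S :&: X1 and B'
   contains S :&: X2.  So a full product layer (i, k - i) has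
   lambda^(i)_r * bar lambda^(k-i)_(t-r) blocks through S.  In a mixed layer every
   class h is paired with exactly z_i classes j (cyclic distance between eps_i
   and w_i), and symmetrically, so the double sum over paired classes collapses
   to Lambda* as soon as the class counts are uniform on one side, i.e.
   r <= s_i or t - r <= s_(k-i); condition (ii) guarantees one of them.  The
   layers are disjoint, since the blocks of layer i meet X1 in exactly i points,
   hence S lies in exactly L_(r,t-r) = Lambda blocks. *)

Lemma disjointP (T : finType) (A B : {pred T}) :
  reflect (forall x, x \in A -> x \in B -> False) [disjoint A & B].
Proof.
apply: (iffP pred0P) => [AB0 x xA xB | nAB x /=]; first by have := AB0 x; rewrite /= xA xB.
by apply/negbTE/andP => -[/nAB].
Qed.

Section BigcupSeq.
Variables (T : finType) (I : eqType) (r : seq I) (P : pred I) (F : I -> {set T}).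

Lemma bigcup_seqP x :
  reflect (exists2 i, (i \in r) && P i & x \in F i) (x \in \bigcup_(i <- r | P i) F i).
Proof.
apply: (iffP idP) => [|[i /andP[ir Pi] xF]].
  rewrite big_seq_cond; elim/big_rec: _ => [|i U iP _ /setUP[xF | //]]; first by rewrite inE.
  by exists i.
by rewrite (big_rem i ir) Pi inE xF.
Qed.

Lemma bigcup_seq_sup i : i \in r -> P i -> F i \subset \bigcup_(j <- r | P j) F j.
Proof. by move=> ir Pi; apply/subsetP => x xF; apply/bigcup_seqP; exists i; rewrite ?ir. Qed.

Lemma bigcup_seq_subset (U : {set T}) :
  (forall i, i \in r -> P i -> F i \subset U) -> \bigcup_(i <- r | P i) F i \subset U.
Proof.
by move=> FU; apply/subsetP => x /bigcup_seqP[i /andP[ir Pi]]; apply/subsetP/FU.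
Qed.

End BigcupSeq.

Section BlockCounting.
Variable T : finType.
Implicit Types (C D : {set {set T}}) (P S : {set T}).

Lemma complete_blocks_sub_powerset P i : complete_blocks P i \subset powerset P.
Proof. by apply/subsetP => b; rewrite !inE => /andP[]. Qed.

Lemma subset_of_powerset P C b : C \subset powerset P -> b \in C -> b \subset P.
Proof. by move=> CP bC; rewrite -powersetE (subsetP CP). Qed.

Lemma design_sub_complete P t k lam C :
  is_design P t k lam C -> C \subset complete_blocks P k.
Proof. by move=> [blocks _]; apply/subsetP => b /blocks[sbP cb]; rewrite inE sbP cb eqxx. Qed.

Lemma design_family_sub_complete P t k (C : nat -> {set {set T}}) (lam : nat -> nat) :
  (forall i, i <= t -> C i = complete_blocks P i) ->
  (forall i, t < i <= k -> is_design P t i (lam i) (C i)) ->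
  forall i, i <= k -> C i \subset complete_blocks P i.
Proof.
move=> Ccomplete Cdesign i ik; case: (leqP i t) => [/Ccomplete -> // | ti].
by apply: design_sub_complete (Cdesign i _); rewrite ti.
Qed.

Lemma blocks_containingU C D S :
  [disjoint C & D] ->
  blocks_containing (C :|: D) S = blocks_containing C S + blocks_containing D S.
Proof.
move=> dCD; rewrite /blocks_containing !setIdE setIUl cardsU.
set Q := [set b : {set T} | S \subset b].
have dCDQ := disjointWl (subsetIl C Q) (disjointWr (subsetIl D Q) dCD).
by rewrite (disjoint_setI0 dCDQ) cards0 subn0.
Qed.

Lemma blocks_containing_bigcup (I : eqType) (r : seq I) (P : pred I)
    (G : I -> {set {set T}}) S :
  uniq r -> {in r &, forall i j, P i -> P j -> i != j -> [disjoint G i & G j]} ->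
  blocks_containing (\bigcup_(i <- r | P i) G i) S =
    \sum_(i <- r | P i) blocks_containing (G i) S.
Proof.
elim: r => [|a r IH] /=; first by rewrite !big_nil /blocks_containing setIdE set0I cards0.
move=> /andP[ar ur] dG; rewrite !big_cons.
have dG' : {in r &, forall i j, P i -> P j -> i != j -> [disjoint G i & G j]}.
  by move=> i j ir jr; apply: dG; rewrite inE ?ir ?jr orbT.
case: ifP => Pa; last exact: IH.
rewrite blocks_containingU ?IH //; apply/disjointP => b bGa /bigcup_seqP[j /andP[jr Pj] bGj].
have aj : a != j by apply: contraNneq ar => ->.
have ja : j \in a :: r by rewrite inE jr orbT.
by rewrite (disjointFr (dG a j (mem_head _ _) ja Pa Pj aj) bGa) in bGj.
Qed.

Lemma blocks_containing_classes N (A : nat -> {set {set T}}) S :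
  (forall h h', 1 <= h <= N -> 1 <= h' <= N -> h != h' -> [disjoint A h & A h']) ->
  blocks_containing (\bigcup_(1 <= h < N.+1) A h) S =
    \sum_(1 <= h < N.+1) blocks_containing (A h) S.
Proof.
move=> dA; rewrite blocks_containing_bigcup ?iota_uniq // => h h'.
by rewrite !mem_index_iota => hN h'N _ _; apply: dA.
Qed.

End BlockCounting.

Section JoinBlocks.
Variables (T : finType) (X1 X2 : {set T}).
Hypothesis dX : [disjoint X1 & X2].
Implicit Types (C D : {set {set T}}) (S b : {set T}).

Lemma setUIX1 b1 b2 : b1 \subset X1 -> b2 \subset X2 -> (b1 :|: b2) :&: X1 = b1.
Proof.
move=> s1 s2; rewrite setIUl (setIidPl s1) disjoint_setI0 ?setU0 //.
by rewrite disjoint_sym; apply: disjointWr s2 dX.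
Qed.

Lemma setUIX2 b1 b2 : b1 \subset X1 -> b2 \subset X2 -> (b1 :|: b2) :&: X2 = b2.
Proof.
move=> s1 s2; rewrite setIUl (setIidPl s2) disjoint_setI0 ?set0U //.
exact: disjointWl s1 dX.
Qed.

Lemma subsetU_parts S b1 b2 :
  S \subset X1 :|: X2 -> b1 \subset X1 -> b2 \subset X2 ->
  (S \subset b1 :|: b2) = (S :&: X1 \subset b1) && (S :&: X2 \subset b2).
Proof.
move=> sSX s1 s2; apply/idP/andP => [sSb | [sS1 sS2]].
  by rewrite -(setUIX1 s1 s2) -{2}(setUIX2 s1 s2) !setSI.
by rewrite -(setIidPl sSX) setIUr setUSS.
Qed.

Lemma join_blocks_bigcupr C (I : Type) (r : seq I) (P : pred I) (F : I -> {set {set T}}) :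
  join_blocks C (\bigcup_(i <- r | P i) F i) = \bigcup_(i <- r | P i) join_blocks C (F i).
Proof.
apply: (big_morph (join_blocks C)) => [D D'|]; first exact: imset2Ur.
by apply/setP => b; rewrite inE; apply/imset2P => -[? ?]; rewrite inE.
Qed.

Section FixedFamilies.
Variables (C1 C2 : {set {set T}}).
Hypotheses (C1X1 : C1 \subset powerset X1) (C2X2 : C2 \subset powerset X2).

Let sub1 b (bC : b \in C1) : b \subset X1 := subset_of_powerset C1X1 bC.
Let sub2 b (bC : b \in C2) : b \subset X2 := subset_of_powerset C2X2 bC.

Lemma mem_join_blocks b :
  b \in join_blocks C1 C2 -> b :&: X1 \in C1 /\ b :&: X2 \in C2.
Proof.
move=> /imset2P[b1 b2 b1C b2C ->].
by rewrite (setUIX1 (sub1 b1C) (sub2 b2C)) (setUIX2 (sub1 b1C) (sub2 b2C)).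
Qed.

Lemma card_join_blocks : #|join_blocks C1 C2| = #|C1| * #|C2|.
Proof.
rewrite /join_blocks curry_imset2X card_in_imset ?cardsX //.
move=> [a1 a2] [c1 c2] /setXP[/= a1C a2C] /setXP[/= c1C c2C] /= eq_ac.
congr pair.
  by rewrite -(setUIX1 (sub1 a1C) (sub2 a2C)) eq_ac (setUIX1 (sub1 c1C) (sub2 c2C)).
by rewrite -(setUIX2 (sub1 a1C) (sub2 a2C)) eq_ac (setUIX2 (sub1 c1C) (sub2 c2C)).
Qed.

End FixedFamilies.

Lemma blocks_containing_join C1 C2 S :
  C1 \subset powerset X1 -> C2 \subset powerset X2 -> S \subset X1 :|: X2 ->
  blocks_containing (join_blocks C1 C2) S =
    blocks_containing C1 (S :&: X1) * blocks_containing C2 (S :&: X2).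
Proof.
move=> C1X1 C2X2 sSX.
have sub1 b : b \in C1 -> b \subset X1 := subset_of_powerset C1X1.
have sub2 b : b \in C2 -> b \subset X2 := subset_of_powerset C2X2.
rewrite /blocks_containing; suff -> : [set b in join_blocks C1 C2 | S \subset b] =
    join_blocks [set b in C1 | S :&: X1 \subset b] [set b in C2 | S :&: X2 \subset b].
  rewrite card_join_blocks // setIdE.
    exact: subset_trans (subsetIl _ _) C1X1.
  exact: subset_trans (subsetIl _ _) C2X2.
apply/setP => b; rewrite inE; apply/andP/imset2P.
  move=> [/imset2P[b1 b2 b1C b2C ->]].
  rewrite subsetU_parts ?(sub1 _ b1C) ?(sub2 _ b2C) // => /andP[s1 s2].
  by exists b1 b2; rewrite // inE ?b1C ?b2C.
move=> [b1 b2]; rewrite !inE => /andP[b1C s1] /andP[b2C s2] ->.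
by rewrite subsetU_parts ?(sub1 _ b1C) ?(sub2 _ b2C) ?s1 ?s2 //; split=> //; apply: imset2_f.
Qed.

Lemma disjoint_join_blocks C1 C2 C1' C2' :
  C1 \subset powerset X1 -> C2 \subset powerset X2 ->
  C1' \subset powerset X1 -> C2' \subset powerset X2 ->
  [disjoint C1 & C1'] -> [disjoint join_blocks C1 C2 & join_blocks C1' C2'].
Proof.
move=> C1X1 C2X2 C1'X1 C2'X2 dC; apply/disjointP => b.
move=> /(mem_join_blocks C1X1 C2X2)[bC1 _] /(mem_join_blocks C1'X1 C2'X2)[bC1' _].
by rewrite (disjointFr dC bC1) in bC1'.
Qed.

Lemma Bstar_sub_join N (A Ab : nat -> {set {set T}}) eps w :
  Bstar N A Ab eps w \subset
    join_blocks (\bigcup_(1 <= h < N.+1) A h) (\bigcup_(1 <= j < N.+1) Ab j).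
Proof.
apply: bigcup_seq_subset => h hr _; apply: bigcup_seq_subset => j jr _.
by apply: imset2S; apply: bigcup_seq_sup.
Qed.

Section Bstar.
Variables (N : nat) (A Ab : nat -> {set {set T}}) (eps : bool) (w : nat).
Hypotheses (AX1 : \bigcup_(1 <= h < N.+1) A h \subset powerset X1)
           (AbX2 : \bigcup_(1 <= j < N.+1) Ab j \subset powerset X2).
Hypotheses (dA : forall h h', 1 <= h <= N -> 1 <= h' <= N -> h != h' ->
                   [disjoint A h & A h'])
           (dAb : forall j j', 1 <= j <= N -> 1 <= j' <= N -> j != j' ->
                   [disjoint Ab j & Ab j']).

Lemma blocks_containing_Bstar S :
  S \subset X1 :|: X2 ->
  blocks_containing (Bstar N A Ab eps w) S =
    \sum_(1 <= h < N.+1) blocks_containing (A h) (S :&: X1) *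
      \sum_(1 <= j < N.+1 | eps <= cdist N h j <= w)
        blocks_containing (Ab j) (S :&: X2).
Proof.
move=> sSX.
have A_pow h : 1 <= h <= N -> A h \subset powerset X1.
  by move=> hN; apply: subset_trans AX1; apply: bigcup_seq_sup; rewrite ?mem_index_iota.
have window_pow h : \bigcup_(1 <= j < N.+1 | eps <= cdist N h j <= w) Ab j \subset powerset X2.
  apply: subset_trans AbX2; apply: bigcup_seq_subset => j jr _.
  exact: bigcup_seq_sup.
rewrite /Bstar; under eq_bigr => h _ do rewrite -join_blocks_bigcupr.
rewrite blocks_containing_bigcup ?iota_uniq //; last first.
  move=> h h'; rewrite !mem_index_iota => hN h'N _ _ hh'.
  by apply: disjoint_join_blocks; rewrite ?A_pow ?window_pow ?dA.
rewrite big_seq [RHS]big_seq; apply: eq_bigr => h; rewrite mem_index_iota => hN.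
rewrite blocks_containing_join ?A_pow ?blocks_containing_bigcup ?iota_uniq //.
by move=> j j'; rewrite !mem_index_iota => jN j'N _ _; apply: dAb.
Qed.

End Bstar.

End JoinBlocks.

Lemma sum_nat_const_on (a b c : nat) (F : nat -> nat) :
  (forall m, a <= m < b -> F m = c) -> \sum_(a <= m < b) F m = (b - a) * c.
Proof. by move=> Fc; rewrite (eq_big_nat _ _ Fc) sum_nat_const_nat. Qed.

Definition cshift (N h j : nat) : nat := if h <= j then j - h else j + N - h.

Lemma sum_cshift N h (F : nat -> nat) :
  1 <= h <= N -> \sum_(1 <= j < N.+1) F (cshift N h j) = \sum_(0 <= m < N) F m.
Proof.
move=> hN; rewrite /index_iota subSS !subn0 -(big_map (cshift N h) predT F).
apply/perm_big/uniq_perm; rewrite ?iota_uniq //.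
  rewrite map_inj_in_uniq ?iota_uniq // => a b; rewrite !mem_iota /cshift.
  by case: ifP; case: ifP; lia.
move=> m; rewrite mem_iota; apply/mapP/idP => [[j] | mN].
  by rewrite mem_iota /cshift => jN ->; case: ifP; lia.
exists (if m + h <= N then m + h else m + h - N); first by rewrite mem_iota; case: ifP; lia.
by rewrite /cshift; case: ifP; case: ifP; lia.
Qed.

Lemma cdist_cshift N h j :
  1 <= h <= N -> 1 <= j <= N -> cdist N h j = minn (cshift N h j) (N - cshift N h j).
Proof. by rewrite /cdist /cshift; case: ifP; lia. Qed.

Lemma cdistC N h j : cdist N h j = cdist N j h.
Proof. by rewrite /cdist addnC. Qed.

Lemma double_half_cover t s sb r :
  (t./2).*2 <= s + sb -> (r <= s) || (t - r <= sb).
Proof. by have := odd_double_half t; have := leq_b1 (odd t); lia. Qed.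

Section CyclicWindow.
Variables (N w : nat) (eps : bool).
Hypotheses (eps_le_w : eps <= w) (w_le_half : w <= N./2).

Lemma count_minn_window :
  \sum_(0 <= m < N) ((eps <= minn m (N - m)) && (minn m (N - m) <= w)) = zval N w eps.
Proof.
case: N w_le_half => [|n] wn.
  by move: wn; rewrite leqn0 => /eqP w0; rewrite big_geq // /zval w0 /= sub0n.
rewrite (@big_cat_nat _ _ _ eps) /=; [|lia|lia].
rewrite (@big_cat_nat _ _ _ w.+1 eps) /=; [|lia|lia].
rewrite (@sum_nat_const_on _ _ 0); last by move=> m mr; lia.
rewrite (@sum_nat_const_on eps _ 1); last by move=> m mr; lia.
rewrite /zval; case: ltnP => w_small.
  rewrite (@big_cat_nat _ _ _ (n.+1 - w)) /=; [|lia|lia].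
  rewrite (@sum_nat_const_on _ _ 0); last by move=> m mr; lia.
  rewrite (@sum_nat_const_on (n.+1 - w) _ 1); last by move=> m mr; lia.
  lia.
rewrite (@sum_nat_const_on _ _ 1); last by move=> m mr; lia.
lia.
Qed.

Lemma count_cdist_window h :
  1 <= h <= N -> \sum_(1 <= j < N.+1 | eps <= cdist N h j <= w) 1 = zval N w eps.
Proof.
move=> hN; rewrite big_mkcond /= -count_minn_window -(sum_cshift _ hN).
by apply: eq_big_nat => j jN; rewrite cdist_cshift.
Qed.

Lemma sum_window_const_row h (g : nat -> nat) c :
  1 <= h <= N -> (forall j, 1 <= j <= N -> g j = c) ->
  \sum_(1 <= j < N.+1 | eps <= cdist N h j <= w) g j = c * zval N w eps.
Proof.
move=> hN gc; rewrite -(count_cdist_window hN) big_distrr /= big_mkcond [RHS]big_mkcond /=.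
by apply: eq_big_nat => j jN; rewrite gc ?muln1 //; case: ifP.
Qed.

Lemma sum_window_constr (f g : nat -> nat) c :
  (forall j, 1 <= j <= N -> g j = c) ->
  \sum_(1 <= h < N.+1) f h * \sum_(1 <= j < N.+1 | eps <= cdist N h j <= w) g j =
    (\sum_(1 <= h < N.+1) f h) * c * zval N w eps.
Proof.
move=> gc; rewrite -mulnA big_distrl /=; apply: eq_big_nat => h hN.
by rewrite (sum_window_const_row hN gc).
Qed.

Lemma sum_window_constl (f g : nat -> nat) a :
  (forall h, 1 <= h <= N -> f h = a) ->
  \sum_(1 <= h < N.+1) f h * \sum_(1 <= j < N.+1 | eps <= cdist N h j <= w) g j =
    a * (\sum_(1 <= j < N.+1) g j) * zval N w eps.
Proof.
move=> fa; rewrite (eq_big_nat _ _ (F2 := fun h =>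
  a * \sum_(1 <= j < N.+1 | eps <= cdist N h j <= w) g j)); last by move=> h /fa->.
rewrite -big_distrr /= (exchange_big_dep_nat predT) // -mulnA big_distrl /=.
congr (_ * _); apply: eq_big_nat => j jN.
under eq_bigl => h do rewrite cdistC.
by rewrite (sum_window_const_row (g := fun=> g j) (c := g j)) 1?mulnC.
Qed.

Lemma sum_window_const (f g : nat -> nat) a c :
  (forall h, 1 <= h <= N -> f h = a) -> (forall j, 1 <= j <= N -> g j = c) ->
  \sum_(1 <= h < N.+1) f h * \sum_(1 <= j < N.+1 | eps <= cdist N h j <= w) g j =
    a * c * N * zval N w eps.
Proof.
move=> fa gc; rewrite (sum_window_constr _ gc) (@sum_nat_const_on 1 N.+1 a f fa).
by rewrite subn1 /=; lia.
Qed.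

End CyclicWindow.

Section Layers.
Variables (X : finType) (X1 X2 : {set X}) (k t : nat) (B Bb : nat -> {set {set X}})
  (lam lamb : nat -> nat -> nat).
Hypotheses (dX : [disjoint X1 & X2]) (covX : X1 :|: X2 = [set: X]).
Hypotheses (B_complete : forall i, i <= k -> B i \subset complete_blocks X1 i)
           (Bb_complete : forall i, i <= k -> Bb i \subset complete_blocks X2 i).
Hypotheses (hlam : forall i r (S : {set X}), i <= k -> r <= t -> S \subset X1 -> #|S| = r ->
                     blocks_containing (B i) S = lam i r)
           (hlamb : forall i r (S : {set X}), i <= k -> r <= t -> S \subset X2 -> #|S| = r ->
                     blocks_containing (Bb i) S = lamb i r).

Let B_pow i : i <= k -> B i \subset powerset X1.
Proof. by move=> ik; apply: subset_trans (B_complete ik) (complete_blocks_sub_powerset _ _). Qed.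
Let Bb_pow i : Bb (k - i) \subset powerset X2.
Proof.
exact: subset_trans (Bb_complete (leq_subr i k)) (complete_blocks_sub_powerset _ _).
Qed.
Let sub_cover (S : {set X}) : S \subset X1 :|: X2.
Proof. by rewrite covX subsetT. Qed.

Lemma card_join_layer i b :
  i <= k -> b \in join_blocks (B i) (Bb (k - i)) -> #|b :&: X1| = i /\ #|b| = k.
Proof.
move=> ik /imset2P[b1 b2 b1B b2B ->].
have /[!inE] /andP[s1 /eqP c1] := subsetP (B_complete ik) _ b1B.
have /[!inE] /andP[s2 /eqP c2] := subsetP (Bb_complete (leq_subr i k)) _ b2B.
rewrite (setUIX1 dX s1 s2) cardsU (disjoint_setI0 (disjointWl s1 (disjointWr s2 dX))).
by rewrite cards0 c1 c2 subn0 subnKC.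
Qed.

Lemma blocks_containing_join_layer i r (S : {set X}) :
  i <= k -> r <= t -> #|S :&: X1| = r -> #|S :&: X2| = t - r ->
  blocks_containing (join_blocks (B i) (Bb (k - i))) S = lam i r * lamb (k - i) (t - r).
Proof.
move=> ik rt S1 S2; rewrite (blocks_containing_join dX (B_pow ik) (Bb_pow i) (sub_cover S)).
by rewrite (hlam ik rt) ?subsetIr // (hlamb (leq_subr i k) (leq_subr r t)) ?subsetIr.
Qed.

Lemma blocks_containing_Bstar_layer i N s sb (A Ab : nat -> {set {set X}})
    (lamS lamSb : nat -> nat) (eps : bool) w r (S : {set X}) :
  i <= k -> r <= t ->
  (forall h h', 1 <= h <= N -> 1 <= h' <= N -> h != h' -> [disjoint A h & A h']) ->
  \bigcup_(1 <= h < N.+1) A h = B i ->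
  (forall h r (S : {set X}), 1 <= h <= N -> r <= s -> S \subset X1 -> #|S| = r ->
     blocks_containing (A h) S = lamS r) ->
  (forall j j', 1 <= j <= N -> 1 <= j' <= N -> j != j' -> [disjoint Ab j & Ab j']) ->
  \bigcup_(1 <= j < N.+1) Ab j = Bb (k - i) ->
  (forall j r (S : {set X}), 1 <= j <= N -> r <= sb -> S \subset X2 -> #|S| = r ->
     blocks_containing (Ab j) S = lamSb r) ->
  (t./2).*2 <= s + sb -> eps <= w <= N./2 ->
  #|S :&: X1| = r -> #|S :&: X2| = t - r ->
  blocks_containing (Bstar N A Ab eps w) S =
    Lambda_star t r s sb N (zval N w eps) (lamS r) (lamSb (t - r)) (lam i r)
      (lamb (k - i) (t - r)).
Proof.
move=> ik rt dA UA cA dAb UAb cAb st /andP[ew wN] S1 S2.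
have sum_A : \sum_(1 <= h < N.+1) blocks_containing (A h) (S :&: X1) = lam i r.
  by rewrite -blocks_containing_classes // UA (hlam ik rt) ?subsetIr.
have sum_Ab : \sum_(1 <= j < N.+1) blocks_containing (Ab j) (S :&: X2) = lamb (k - i) (t - r).
  by rewrite -blocks_containing_classes // UAb (hlamb (leq_subr i k) (leq_subr r t)) ?subsetIr.
have AX1 : \bigcup_(1 <= h < N.+1) A h \subset powerset X1 by rewrite UA B_pow.
have AbX2 : \bigcup_(1 <= j < N.+1) Ab j \subset powerset X2 by rewrite UAb Bb_pow.
rewrite (blocks_containing_Bstar dX _ _ AX1 AbX2 dA dAb (sub_cover S)).
have cA' h : 1 <= h <= N -> r <= s -> blocks_containing (A h) (S :&: X1) = lamS r.
  by move=> hN rs; rewrite (cA h r) ?subsetIr.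
have cAb' j : 1 <= j <= N -> t - r <= sb ->
    blocks_containing (Ab j) (S :&: X2) = lamSb (t - r).
  by move=> jN trs; rewrite (cAb j (t - r)) ?subsetIr.
rewrite /Lambda_star; case: leqP => rs; case: leqP => trs.
- by rewrite (sum_window_const ew wN (fun h hN => cA' h hN rs) (fun j jN => cAb' j jN trs)).
- by rewrite (sum_window_constl ew wN _ (fun h hN => cA' h hN rs)) sum_Ab.
- by rewrite (sum_window_constr ew wN _ (fun j jN => cAb' j jN trs)) sum_A.
- by have := double_half_cover r st; rewrite leqNgt rs leqNgt trs.
Qed.

Lemma design_of_layers (u : nat -> bool) (G : nat -> {set {set X}}) (L : nat -> nat -> nat)
    Lam :
  (forall i, i <= k -> G i \subset join_blocks (B i) (Bb (k - i))) ->
  (forall i r (S : {set X}), i <= k -> r <= t -> #|S :&: X1| = r -> #|S :&: X2| = t - r ->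
     blocks_containing (G i) S = L i r) ->
  (forall r, r <= t -> \sum_(0 <= i < k.+1) u i * L i r = Lam) ->
  is_design [set: X] t k Lam (\bigcup_(0 <= i < k.+1 | u i) G i).
Proof.
move=> G_sub G_count L_sum.
have G_card i b : i \in index_iota 0 k.+1 -> b \in G i -> #|b :&: X1| = i /\ #|b| = k.
  by rewrite mem_index_iota => ik bG; apply: card_join_layer (subsetP (G_sub i _) b bG); lia.
split=> [b /bigcup_seqP[i /andP[ik _] /(G_card i b ik)[_ ->]] | S _ cS].
  by rewrite subsetT.
have cS12 : #|S :&: X1| + #|S :&: X2| = t.
  rewrite -cS -(cardsUI (S :&: X1)) -setIUr covX setIT -setIIr.
  by rewrite (disjoint_setI0 dX) setI0 cards0 addn0.
rewrite blocks_containing_bigcup ?iota_uniq //; last first.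
  move=> i j ir jr _ _ ij; apply/disjointP => b /(G_card i b ir)[bi _] /(G_card j b jr)[bj _].
  by move: ij; rewrite -bi -bj eqxx.
rewrite -(L_sum #|S :&: X1|); last by rewrite -cS12 leq_addr.
rewrite big_mkcond; apply: eq_big_nat => i ik; case: (u i) => //=.
by rewrite mul1n (G_count i #|S :&: X1|) //; lia.
Qed.

End Layers.

Unset Implicit Arguments.

Theorem theorem3p1
  (X : finType) (v k t v1 v2 : nat) (X1 X2 : {set X})
  (B Bb : nat -> {set {set X}})
  (lam lamb : nat -> nat -> nat)
  (R : pred nat)
  (N Nb s sb : nat -> nat)
  (A Ab : nat -> nat -> {set {set X}})
  (lamS lamSb : nat -> nat -> nat)
  (eps : nat -> bool) (w : nat -> nat) (u : nat -> bool) (Lam : nat) :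
  (* parameters and the partition X = X1 u X2 *)
  2 <= t -> t < k -> k < v ->
  #|X| = v -> [disjoint X1 & X2] -> X1 :|: X2 = [set: X] ->
  #|X1| = v1 -> #|X2| = v2 ->
  (* the designs D_i and bar D_i *)
  (forall i, i <= t -> B i = complete_blocks X1 i) ->
  (forall i, t < i <= k -> is_design X1 t i (lam i t) (B i)) ->
  (forall i, i <= t -> Bb i = complete_blocks X2 i) ->
  (forall i, t < i <= k -> is_design X2 t i (lamb i t) (Bb i)) ->
  (* lambda^(i)_r and bar lambda^(i)_r *)
  (forall i r (S : {set X}), i <= k -> r <= t -> S \subset X1 -> #|S| = r ->
      blocks_containing (B i) S = lam i r) ->
  (forall i r (S : {set X}), i <= k -> r <= t -> S \subset X2 -> #|S| = r ->
      blocks_containing (Bb i) S = lamb i r) ->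
  (* for (i,k-i) in R: partition of D_i into N_i classes *)
  (forall i, i <= k -> R i ->
     (forall h, 1 <= h <= N i -> A i h != set0) /\
     (forall h h', 1 <= h <= N i -> 1 <= h' <= N i -> h != h' ->
        [disjoint A i h & A i h']) /\
     (\bigcup_(1 <= h < (N i).+1) A i h = B i) /\
     (forall h, 1 <= h <= N i -> is_design X1 (s i) i (lamS i (s i)) (A i h)) /\
     (forall h r (S : {set X}), 1 <= h <= N i -> r <= s i -> S \subset X1 ->
        #|S| = r -> blocks_containing (A i h) S = lamS i r) /\
     s i < t) ->
  (* for (i,k-i) in R: partition of bar D_{k-i} into bar N_{k-i} classes *)
  (forall i, i <= k -> R i ->
     (forall j, 1 <= j <= Nb (k - i) -> Ab (k - i) j != set0) /\
     (forall j j', 1 <= j <= Nb (k - i) -> 1 <= j' <= Nb (k - i) -> j != j' ->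
        [disjoint Ab (k - i) j & Ab (k - i) j']) /\
     (\bigcup_(1 <= j < (Nb (k - i)).+1) Ab (k - i) j = Bb (k - i)) /\
     (forall j, 1 <= j <= Nb (k - i) ->
        is_design X2 (sb (k - i)) (k - i) (lamSb (k - i) (sb (k - i))) (Ab (k - i) j)) /\
     (forall j r (S : {set X}), 1 <= j <= Nb (k - i) -> r <= sb (k - i) ->
        S \subset X2 -> #|S| = r -> blocks_containing (Ab (k - i) j) S = lamSb (k - i) r) /\
     sb (k - i) < t) ->
  (* conditions (i) and (ii) *)
  (forall i, i <= k -> R i -> N i = Nb (k - i)) ->
  (forall i, i <= k -> R i -> (t./2).*2 <= s i + sb (k - i)) ->
  (* choice of eps_i and w_i *)
  (forall i, i <= k -> R i -> eps i <= w i <= (N i)./2) ->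
  (* L_{r,t-r} = Lam > 0 for all r *)
  0 < Lam ->
  (forall r, r <= t ->
     \sum_(0 <= i < k.+1 | R i)
        u i * Lambda_star t r (s i) (sb (k - i)) (N i) (zval (N i) (w i) (eps i))
                (lamS i r) (lamSb (k - i) (t - r)) (lam i r) (lamb (k - i) (t - r))
     + \sum_(0 <= i < k.+1 | ~~ R i) u i * (lam i r * lamb (k - i) (t - r))
     = Lam) ->
  is_design [set: X] t k Lam
    ((\bigcup_(0 <= i < k.+1 | R i && u i)
        Bstar (N i) (A i) (Ab (k - i)) (eps i) (w i))
     :|: (\bigcup_(0 <= i < k.+1 | ~~ R i && u i)
        join_blocks (B i) (Bb (k - i)))).
Proof.
move=> _ _ _ _ dX covX _ _ hBc hBd hBbc hBbd hlam hlamb hA hAb hN hs hew _ hL.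
have B_complete := design_family_sub_complete hBc hBd.
have Bb_complete := design_family_sub_complete hBbc hBbd.
pose G i := if R i then Bstar (N i) (A i) (Ab (k - i)) (eps i) (w i)
            else join_blocks (B i) (Bb (k - i)).
pose L i r := if R i then Lambda_star t r (s i) (sb (k - i)) (N i) (zval (N i) (w i) (eps i))
                (lamS i r) (lamSb (k - i) (t - r)) (lam i r) (lamb (k - i) (t - r))
              else lam i r * lamb (k - i) (t - r).
have -> : (\bigcup_(0 <= i < k.+1 | R i && u i) Bstar (N i) (A i) (Ab (k - i)) (eps i) (w i))
     :|: (\bigcup_(0 <= i < k.+1 | ~~ R i && u i) join_blocks (B i) (Bb (k - i)))
    = \bigcup_(0 <= i < k.+1 | u i) G i.
  by rewrite big_if; congr (_ :|: _); apply: eq_bigl => i; rewrite andbC.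
apply: (design_of_layers dX covX B_complete Bb_complete (L := L)) => [i ik | i r S ik rt | r rt].
- rewrite /G; case: ifP => Ri //; have [_ [_ [UA _]]] := hA i ik Ri.
  by have [_ [_ [UAb _]]] := hAb i ik Ri; rewrite -UA -UAb -hN //; apply: Bstar_sub_join.
- rewrite /G /L; case: ifP => Ri; last exact: blocks_containing_join_layer.
  have [_ [dA [UA [_ [cA _]]]]] := hA i ik Ri.
  have := hAb i ik Ri; rewrite -hN // => -[_ [dAb [UAb [_ [cAb _]]]]].
  exact: (blocks_containing_Bstar_layer dX covX B_complete Bb_complete hlam hlamb ik rt
    dA UA cA dAb UAb cAb (hs i ik Ri) (hew i ik Ri)).
- rewrite -(hL r rt) (bigID R) /=; congr (_ + _); apply: eq_bigr => i Ri; rewrite /L ?Ri //.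
  by rewrite (negbTE Ri).
Qed.
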